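(* Let $I$ and $J$ be compositions of $n$ and let $W'(I,J)$ be the set of packed words $w$ with $\mathrm{WC}(w)=I$ and $\mathrm{DC}(w)=J$. Then the coefficient $D_I^J(q)$ of $\Psi_I$ in $R_J(q)$ is \[ D_I^J(q)=\sum_{w\in W'(I,J)}q^{\mathrm{sinv}(w)}. \]
   Context: Compositions: $I=(i_1,\dots,i_r)$ positive integers with sum $n$; $\ell(I)=r$; $\mathrm{Des}(I)$ the set of partial sums other than $n$; $J\succeq I$ ($J$ coarser) iff $\mathrm{Des}(J)\subseteq\mathrm{Des}(I)$. Over $\mathbb K(q)$ ($\mathrm{char}\,\mathbb K=0$): packed words are words with letter set $\{1,\dots,m\}$; $\mathrm{pack}$ replaces the $t$-th smallest letter by $t$. For a packed word $w=w_1\cdots w_n$: $\mathrm{DC}(w)$ is the composition of $n$ with descent set $\{i:w_i>w_{i+1}\}$; $\mathrm{WC}(w)$ is the composition of $n$ whose descent set is the set of positions $p<n$ with $w_p$ not occurring in $w_{p+1}\cdots w_n$; $\mathrm{sinv}(w)=\#\{i<j:w_i>w_j,\ w_j\text{ not occurring in }w_{j+1}\cdots w_n\}$. $\mathbf{WQSym}$ has basis $\mathbf M_u$ with $\mathbf M_{u'}\mathbf M_{u''}=\sum\mathbf M_u$ over packed $u=v\cdot w$ with $\mathrm{pack}(v)=u'$, $\mathrm{pack}(w)=u''$; $\mathbf M_{u'}\star_q\mathbf M_{u''}=\sum q^{\mathrm{sinv}(u)-\mathrm{sinv}(u')-\mathrm{sinv}(u'')}\mathbf M_u$ (associative). $\mathbf{Sym}$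 is the quotient by the span of $\mathbf M_u-\mathbf M_v$ with $\mathrm{WC}(u)=\mathrm{WC}(v)$, $\zeta$ the quotient map, $\Psi_I=\zeta(\mathbf M_u)$ for $\mathrm{WC}(u)=I$ (a basis). $\tilde S_m=\sum\mathbf M_u$ over nondecreasing packed $u$ of length $m$; $S^J(q)=\zeta(\tilde S_{j_1}\star_q\cdots\star_q\tilde S_{j_l})$; $R_I(q)=\sum_{J\succeq I}(-1)^{\ell(J)-\ell(I)}S^J(q)$. *)

From HB Require Import structures.
From mathcomp Require Import all_boot all_order all_algebra fraction.
Set Implicit Arguments. Unset Strict Implicit. Unset Printing Implicit Defensive.
Import Order.TTheory GRing.Theory Num.Theory.

Definition is_comp (n : nat) (I : seq nat) : bool :=
  all (fun i => 0 < i) I && (sumn I == n).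

(* Des(I): partial sums other than n = i1, i1+i2, ..., i1+..+i_{r-1} *)
Definition Des (I : seq nat) : seq nat := behead (belast 0 (scanl addn 0 I)).

Definition coarser (J I : seq nat) : bool := all (fun d => d \in Des I) (Des J).

(* the composition of n with descent set S (S a sorted subset of {1..n-1}) *)
Definition comp_of (n : nat) (S : seq nat) : seq nat :=
  if n is 0 then [::] else pairmap (fun a b => b - a) 0 (S ++ [:: n]).

Fixpoint allwords (m n : nat) : seq (seq nat) :=
  if n is n'.+1 then [seq a :: w | a <- iota 1 m, w <- allwords m n'] else [:: [::]].

Definition comps (n : nat) : seq (seq nat) :=
  [seq c <- flatten [seq allwords n k | k <- iota 0 n.+1] | is_comp n c].

Definition packed (w : seq nat) : bool :=
  all (fun x => 0 < x) w && all (fun k => k \in w) (iota 1 (foldr maxn 0 w)).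

Definition pack (w : seq nat) : seq nat :=
  [seq (index x (sort leq (undup w))).+1 | x <- w].

Definition packed_words (n : nat) : seq (seq nat) :=
  [seq w <- allwords n n | packed w].

(* DC(w): descent set {i : w_i > w_{i+1}} (positions 1-indexed) *)
Definition DC (w : seq nat) : seq nat :=
  comp_of (size w)
    [seq p <- iota 1 (size w).-1 | nth 0 w p < nth 0 w p.-1].

Definition WC (w : seq nat) : seq nat :=
  comp_of (size w)
    [seq p <- iota 1 (size w).-1 | nth 0 w p.-1 \notin drop p w].

Definition sinv (w : seq nat) : nat :=
  \sum_(0 <= j < size w) \sum_(0 <= i < j)
     ((nth 0 w j < nth 0 w i) && (nth 0 w j \notin drop j.+1 w)).

Local Open Scope ring_scope.

Section WQSym.
Variables (F : fieldType) (q : F).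

(* an element of (the homogeneous components of) WQSym, given by its
   coefficient on each M_u (u packed) *)
Definition wqsym := seq nat -> F.

Definition wq_one : wqsym := fun u => (u == [::])%:R.

(* bilinear extension of
   M_u' *_q M_u'' = sum_{u = v.w, pack v = u', pack w = u''} q^(sinv u - sinv u' - sinv u'') M_u *)
Definition star (a b : wqsym) : wqsym := fun u =>
  if packed u then
    \sum_(0 <= k < (size u).+1)
       a (pack (take k u)) * b (pack (drop k u)) *
       q ^ ((sinv u)%:Z - (sinv (pack (take k u)))%:Z - (sinv (pack (drop k u)))%:Z)
  else 0.

Definition Stilde (m : nat) : wqsym := fun u =>
  (packed u && sorted leq u && (size u == m))%:R.

Definition Sprod (J : seq nat) : wqsym := foldr star wq_one (map Stilde J).

(* coefficient of Psi_I in zeta(x):  zeta(M_u) = Psi_{WC(u)}, and the Psi_I form a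
   basis of Sym, so this coefficient is the sum of the coefficients of x on the M_u
   with WC(u) = I (such u have length |I|). *)
Definition psi_coef (I : seq nat) (x : wqsym) : F :=
  \sum_(u <- packed_words (sumn I) | WC u == I) x u.

(* D_I^J(q) = coefficient of Psi_I in
   R_J(q) = sum_{K coarser than J} (-1)^(l(K)-l(J)) S^K(q),  S^K(q) = zeta(Sprod K) *)
Definition Dcoef (I J : seq nat) : F :=
  \sum_(K <- comps (sumn J) | coarser K J)
     (-1) ^+ (size J - size K) * psi_coef I (Sprod K).

End WQSym.

Definition qK (K : fieldType) : {fraction {poly K}} := @FracField.tofrac {poly K} 'X.

From HB Require Import structures.
From mathcomp Require Import all_boot all_order all_algebra fraction.
From mathcomp Require Import zify.
Set Implicit Arguments. Unset Strict Implicit. Unset Printing Implicit Defensive.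
Import GRing.Theory.

(* Write Des(u) for the set of descent positions of a word u.  Since pack
   preserves both sinv and descents, and a nondecreasing factor carries no
   sinv, induction on K shows that \tilde S_{k_1} *_q ... *_q \tilde S_{k_l}
   is the sum of q^{sinv u} M_u over the packed words u of length |K| with
   Des(u) contained in Des(K).  Hence
     D_I^J = sum_{WC(u) = I} q^{sinv u} sum_{K coarser than J}
               (-1)^{l(J) - l(K)} [Des(u) is contained in Des(K)],
   and as K |-> Des(K) maps the compositions coarser than J bijectively onto
   the subsets of Des(J), the inner sum is an inclusion-exclusion equal to
   [Des(u) = Des(J)], that is, to [DC(u) = J]. *)

Lemma mem_allwords m k w :
  (w \in allwords m k) = (size w == k) && all (fun x => 0 < x <= m) w.
Proof.
elim: k w => [|k IH] [|a w] //=.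
- by apply/allpairsP => -[[x y] [_ _]].
- apply/idP/idP => [/allpairsP[[x y] [hx hy [-> ->]]]|].
    by move: hx hy; rewrite mem_iota IH /= => hx /andP[/eqP -> ->]; rewrite eqxx andbT; lia.
  move=> /andP[hs /andP[ha hw]]; apply/allpairsP; exists (a, w); split => //.
    by rewrite /= mem_iota; lia.
  by rewrite /= IH hw andbT.
Qed.

Lemma allwords_uniq m k : uniq (allwords m k).
Proof.
elim: k => //= k IH; apply: allpairs_uniq => //; first exact: iota_uniq.
by move=> [a w] [b v] _ _ /= [-> ->].
Qed.

Lemma mem_comps n K : (K \in comps n) = is_comp n K.
Proof.
rewrite mem_filter; case/boolP: (is_comp n K) => // /andP[K_pos /eqP <-].
have part_le x : x \in K -> x <= sumn K.
  by elim: (K) => //= a s IH; rewrite in_cons => /orP[/eqP ->|/IH]; lia.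
apply/flatten_mapP; exists (size K).
  rewrite mem_iota add0n ltnS.
  by elim: (K) K_pos => //= a s IH /andP[a_pos /IH]; lia.
rewrite mem_allwords eqxx /=; apply/allP => x xK.
by rewrite (allP K_pos x xK) part_le.
Qed.

Lemma comps_uniq n : uniq (comps n).
Proof.
rewrite filter_uniq //; elim: (iota 0 n.+1) (iota_uniq 0 n.+1) => //= a s IH.
case/andP=> a_s s_uniq; rewrite cat_uniq allwords_uniq IH // andbT.
apply/hasP => -[w /flatten_mapP[k ks w_k] w_a].
move: w_a w_k; rewrite !mem_allwords => /andP[/eqP wa _] /andP[/eqP wk _].
by move: a_s; rewrite -wa wk ks.
Qed.

Lemma mem_packed_words n u : u \in packed_words n -> packed u /\ size u = n.
Proof. by rewrite mem_filter mem_allwords => /andP[-> /andP[/eqP -> _]]. Qed.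

(* [S] is the descent set of a composition of [n]: a strictly increasing
   sequence in the open interval (0, n). *)
Definition descent_set (n : nat) (S : seq nat) : bool := path ltn 0 (rcons S n).

Lemma descent_set_sorted n S : descent_set n S -> sorted ltn S.
Proof.
rewrite /descent_set => /path_sorted.
by apply: subseq_sorted; [exact: ltn_trans | exact: subseq_rcons].
Qed.

Lemma descent_set_subseq n S T :
  subseq S T -> descent_set n T -> descent_set n S.
Proof.
move=> ST Tn; have ST0 : subseq (0 :: rcons S n) (0 :: rcons T n).
  by rewrite /= -!cats1 cat_subseq.
by have := subseq_sorted ltn_trans ST0 Tn.
Qed.

Lemma comp_nil n K : 0 < n -> is_comp n K -> K != [::].
Proof. by move=> n_gt0 /andP[_ /eqP]; case: K => //= n0; rewrite -n0 in n_gt0. Qed.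

Lemma comp0 K : is_comp 0 K -> K = [::].
Proof. by case: K => //= a K /andP[/andP[a_gt0 _]]; rewrite addn_eq0 eqn0Ngt a_gt0. Qed.

Lemma last_scanl_addn x s : last x (scanl addn x s) = x + sumn s.
Proof. by elim: s x => [|a s IH] x /=; rewrite ?addn0 // IH addnA. Qed.

Lemma Des_rcons K : K != [::] -> rcons (Des K) (sumn K) = scanl addn 0 K.
Proof.
by case: K => // a K _; rewrite /Des /= add0n -(last_scanl_addn a K) -lastI.
Qed.

Lemma size_Des K : size (Des K) = (size K).-1.
Proof. by rewrite /Des size_behead size_belast size_scanl. Qed.

Lemma Des_cons k K : K != [::] -> Des (k :: K) = k :: map (addn k) (Des K).
Proof.
have scanl_addn x y s : scanl addn (x + y) s = map (addn x) (scanl addn y s).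
  by elim: s y => //= a s IH y; rewrite -addnA IH.
by case: K => // a K _; rewrite /Des /= !add0n scanl_addn belast_map.
Qed.

Lemma path_scanl_addn x s : all (fun i => 0 < i) s -> path ltn x (scanl addn x s).
Proof. by elim: s x => //= a s IH x /andP[a_gt0 s_pos]; rewrite IH // andbT; lia. Qed.

Lemma descent_set_Des n K : 0 < n -> is_comp n K -> descent_set n (Des K).
Proof.
move=> n_gt0 Kn; have K_nil := comp_nil n_gt0 Kn.
case/andP: Kn => K_pos /eqP <-; rewrite /descent_set Des_rcons //.
exact: path_scanl_addn.
Qed.

Lemma comp_of_rcons n S : 0 < n ->
  comp_of n S = pairmap (fun a b => b - a) 0 (rcons S n).
Proof. by case: n => // n _; rewrite /comp_of cats1. Qed.

Lemma scanl_comp_of n S : 0 < n -> descent_set n S ->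
  scanl addn 0 (comp_of n S) = rcons S n.
Proof.
move=> n_gt0; rewrite comp_of_rcons // /descent_set.
by elim: (rcons S n) 0 => //= a s IH x /andP[xa a_s]; rewrite subnKC ?IH // ltnW.
Qed.

Lemma comp_ofK n K : is_comp n K -> comp_of n (Des K) = K.
Proof.
case: n => [/comp0 -> //|n] Kn; have K_nil := comp_nil (ltn0Sn n) Kn.
rewrite /comp_of cats1 -{1}(eqP (proj2 (andP Kn))) Des_rcons //.
by apply: scanlK => x y; rewrite addKn.
Qed.

Lemma DesK n S : 0 < n -> descent_set n S -> Des (comp_of n S) = S.
Proof. by move=> n_gt0 Sn; rewrite /Des scanl_comp_of // belast_rcons. Qed.

Lemma comp_of_is_comp n S : 0 < n -> descent_set n S -> is_comp n (comp_of n S).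
Proof.
move=> n_gt0 Sn; apply/andP; split.
  have gaps_pos x s : path ltn x s -> all (fun i => 0 < i) (pairmap (fun a b => b - a) x s).
    by elim: s x => //= a s IH x /andP[xa a_s]; rewrite subn_gt0 xa IH.
  by rewrite comp_of_rcons // gaps_pos.
by have := last_scanl_addn 0 (comp_of n S); rewrite scanl_comp_of // last_rcons add0n => <-.
Qed.

Definition descents (u : seq nat) : seq nat :=
  [seq p <- iota 1 (size u).-1 | nth 0 u p < nth 0 u p.-1].

Definition descents_in (S u : seq nat) : bool := all (fun p => p \in S) (descents u).

Lemma DC_descents u : DC u = comp_of (size u) (descents u).
Proof. by []. Qed.

Lemma descent_set_descents u : 0 < size u -> descent_set (size u) (descents u).
Proof.
case: u => // a u _; apply: descent_set_subseq (filter_subseq _ _) _; rewrite /descent_set /=.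
have -> : rcons (iota 1 (size u)) (size u).+1 = iota 1 (size u).+1.
  by rewrite -cats1 -[(size u).+1]addn1 iotaD add1n addn1.
exact: (iota_ltn_sorted 0 (size u).+2).
Qed.

Lemma DC_eq_Des u J : 0 < size u -> is_comp (size u) J ->
  (DC u == J) = (descents u == Des J).
Proof.
move=> u_gt0 Ju; rewrite DC_descents -{1}(comp_ofK Ju).
apply/eqP/eqP => [eq_comp|->//].
by rewrite -(DesK u_gt0 (descent_set_descents u_gt0)) eq_comp DesK // descent_set_Des.
Qed.

Lemma descents_inE S u : descents_in S u =
  all (fun p => (p \in S) || (nth 0 u p.-1 <= nth 0 u p)) (iota 1 (size u).-1).
Proof.
rewrite /descents_in /descents all_filter; apply: eq_all => p /=.
by rewrite [in RHS]leqNgt; case: (_ < _); case: (p \in S).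
Qed.

Lemma sorted_descents_in u : sorted leq u = descents_in [::] u.
Proof.
rewrite descents_inE; apply/(sortedP 0)/allP => [u_le p|u_le i iu].
  by rewrite mem_iota => /andP[p_gt0 pu] /=; rewrite -{2}(prednK p_gt0) u_le; lia.
by have := u_le i.+1; rewrite mem_iota /=; apply; lia.
Qed.

Lemma descents_in_cons k K u :
  0 < k -> all (fun i => 0 < i) K -> size u = k + sumn K ->
  descents_in (Des (k :: K)) u = sorted leq (take k u) && descents_in (Des K) (drop k u).
Proof.
move=> k_gt0 K_pos u_size; have ku : k <= size u by rewrite u_size leq_addr.
case: (posnP (sumn K)) => [K0|K_gt0].
  have uk : size u = k by rewrite u_size K0 addn0.
  have -> : K = [::] by apply: comp0; rewrite /is_comp K_pos K0.
  by rewrite /Des /= -uk take_size drop_size sorted_descents_in andbT.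
have K_nil : K != [::] by case: (K) K_gt0.
rewrite sorted_descents_in !descents_inE (size_takel ku) size_drop u_size addKn.
have -> : (k + sumn K).-1 = k.-1 + sumn K by lia.
rewrite iotaD; have -> : iota (1 + k.-1) (sumn K) = k :: iota k.+1 (sumn K).-1.
  by rewrite -[in LHS](prednK K_gt0) add1n (prednK k_gt0).
rewrite all_cat /= Des_cons // mem_head /=; congr (_ && _).
  apply: eq_in_all => p; rewrite mem_iota => p_range.
  have /negbTE -> : p \notin k :: map (addn k) (Des K).
    rewrite in_cons negb_or; apply/andP; split; first by apply/eqP; lia.
    by apply/mapP => -[x _]; lia.
  by rewrite !nth_take //; lia.
rewrite -[k.+1]addn1 iotaDl all_map; apply: eq_in_all => p; rewrite mem_iota => p_range /=.
have -> : (k + p).-1 = k + p.-1 by lia.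
rewrite in_cons (mem_map (@addnI k)) !nth_drop -{2}[k]addn0 eqn_add2l.
by case: p p_range.
Qed.

Section MonotoneRelabelling.

Variables (w : seq nat) (g : nat -> nat).
Hypothesis g_mono : {in w &, {mono g : x y / x < y}}.

Lemma mono_relabel_inj : {in w &, injective g}.
Proof.
apply: incn_inj_in => x y xw yw.
by rewrite -[LHS]negbK -ltnNge g_mono // ltnNge negbK.
Qed.

Lemma sinv_map : sinv (map g w) = sinv w.
Proof.
rewrite /sinv size_map; apply: eq_big_nat => j /andP[_ jw].
apply: eq_big_nat => i /andP[_ ij]; have iw : i < size w by apply: ltn_trans ij jw.
rewrite !(nth_map 0) // g_mono ?mem_nth // -map_drop; congr (_ && ~~ _).
apply/mapP/idP => [[x xw gx]|]; last by exists (nth 0 w j).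
by rewrite (mono_relabel_inj (mem_nth 0 jw) (mem_drop xw) gx).
Qed.

Lemma descents_map : descents (map g w) = descents w.
Proof.
rewrite /descents size_map; apply: eq_in_filter => p; rewrite mem_iota => p_range.
have [pw p1w] : p < size w /\ p.-1 < size w by split; lia.
by rewrite !(nth_map 0) // g_mono ?mem_nth.
Qed.

End MonotoneRelabelling.

Lemma index_sorted_mono (s : seq nat) :
  sorted ltn s -> {in s &, {mono index^~ s : x y / x < y}}.
Proof.
move=> s_lt x y xs ys; apply/idP/idP; first exact: (sorted_ltn_index ltn_trans s_lt x y xs ys).
have s_le : sorted leq s by apply: sub_sorted s_lt => a b /ltnW.
apply: contraTT; rewrite -!leqNgt.
exact: (sorted_leq_index leq_trans leqnn s_le y x ys xs).
Qed.

Lemma pack_mono w :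
  {in w &, {mono (fun x => (index x (sort leq (undup w))).+1) : x y / x < y}}.
Proof.
move=> x y xw yw; rewrite ltnS index_sorted_mono ?mem_sort ?mem_undup //.
by rewrite ltn_sorted_uniq_leq sort_uniq undup_uniq (sort_sorted leq_total).
Qed.

Lemma sinv_pack w : sinv (pack w) = sinv w.
Proof. exact: sinv_map (@pack_mono w). Qed.

Lemma descents_pack w : descents (pack w) = descents w.
Proof. exact: descents_map (@pack_mono w). Qed.

Lemma packed_pack w : packed (pack w).
Proof.
rewrite /packed; apply/andP; split; first by apply/allP => x /mapP[y _ ->].
set s := sort leq (undup w).
have s_uniq : uniq s by rewrite sort_uniq undup_uniq.
have max_le : foldr maxn 0 (pack w) <= size s.
  have foldr_maxn_le (l : seq nat) : all (fun x => x <= size s) l -> foldr maxn 0 l <= size s.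
    by elim: l => //= a l IH /andP[al /IH]; rewrite geq_max al.
  apply: foldr_maxn_le; apply/allP => _ /mapP[y yw ->].
  by rewrite index_mem mem_sort mem_undup.
apply/allP => k; rewrite mem_iota => k_range; have ks : k.-1 < size s by lia.
apply/mapP; exists (nth 0 s k.-1); first by rewrite -(mem_undup w) -(mem_sort leq) mem_nth.
by rewrite index_uniq //; lia.
Qed.

Lemma descents_in_pack S w : descents_in S (pack w) = descents_in S w.
Proof. by rewrite /descents_in descents_pack. Qed.

Lemma sorted_pack w : sorted leq (pack w) = sorted leq w.
Proof. by rewrite !sorted_descents_in descents_in_pack. Qed.

Lemma sinv_sorted w : sorted leq w -> sinv w = 0.
Proof.
move=> w_sorted; rewrite /sinv big_nat big1 // => j /andP[_ jw].
rewrite big_nat big1 // => i /andP[_ ij]; have iw : i < size w by apply: ltn_trans ij jw.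
by rewrite ltnNge (sorted_leq_nth leq_trans leqnn 0 w_sorted) ?inE // ltnW.
Qed.

Fixpoint subseqs (s : seq nat) : seq (seq nat) :=
  if s is x :: s' then [seq x :: t | t <- subseqs s'] ++ subseqs s' else [:: [::]].

Lemma mem_subseqs s t : (t \in subseqs s) = subseq t s.
Proof.
elim: s t => [|x s IH] t; first by rewrite mem_seq1 subseq0.
rewrite /= mem_cat IH; case: t => [|y t]; first by rewrite sub0seq orbT.
case: eqVneq => [->|yx].
  rewrite mem_map ?IH; last by move=> u v [].
  by apply/orP/idP => [[//|/(subseq_trans (subseq_cons t x))//]|]; left.
suff /negbTE -> : y :: t \notin map (cons x) (subseqs s) by [].
by apply/mapP => -[u _ [yx' _]]; rewrite yx' eqxx in yx.
Qed.

Lemma subseqs_uniq s : uniq s -> uniq (subseqs s).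
Proof.
elim: s => //= x s IH /andP[xs s_uniq]; rewrite cat_uniq IH // andbT.
rewrite map_inj_uniq ?IH //; last by move=> u v [].
apply/hasP => -[t t_s /mapP[u _ t_eq]].
move: t_s; rewrite t_eq mem_subseqs => /mem_subseq/(_ x).
by rewrite mem_head (negbTE xs) => /(_ isT).
Qed.

Lemma sorted_subset_subseq (s1 s2 : seq nat) : sorted ltn s1 -> sorted ltn s2 ->
  {subset s1 <= s2} -> subseq s1 s2.
Proof.
move=> s1_sorted s2_sorted s12.
suff -> : s1 = [seq x <- s2 | x \in s1] by apply: filter_subseq.
apply: (irr_sorted_eq ltn_trans ltnn) => // [|x].
  by rewrite sorted_filter //; exact: ltn_trans.
by rewrite mem_filter; case/boolP: (x \in s1) => // /s12 ->.
Qed.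

Lemma perm_Des_coarser n J : 0 < n -> is_comp n J ->
  perm_eq [seq Des K | K <- comps n & coarser K J] (subseqs (Des J)).
Proof.
move=> n_gt0 Jn; have Jset := descent_set_Des n_gt0 Jn.
have DesJ_uniq : uniq (Des J).
  by rewrite (sorted_uniq ltn_trans ltnn) // (descent_set_sorted Jset).
apply: uniq_perm; last move=> S; rewrite ?subseqs_uniq //.
  rewrite map_inj_in_uniq ?(filter_uniq _ (comps_uniq n)) //.
  move=> K1 K2; rewrite mem_filter mem_comps => /andP[_ K1n].
  rewrite mem_filter mem_comps => /andP[_ K2n] eq_Des.
  by rewrite -(comp_ofK K1n) -(comp_ofK K2n) eq_Des.
rewrite mem_subseqs; apply/mapP/idP => [[K]|SJ].
  rewrite mem_filter mem_comps => /andP[/allP KJ Kn] ->.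
  apply: sorted_subset_subseq KJ; apply: descent_set_sorted; last exact: Jset.
  exact: descent_set_Des n_gt0 Kn.
have Sset := descent_set_subseq SJ Jset.
exists (comp_of n S); last by rewrite DesK.
rewrite mem_filter mem_comps comp_of_is_comp // andbT /coarser DesK //.
by apply/allP => x /(mem_subseq SJ).
Qed.

Local Open Scope ring_scope.

Lemma sum_subseqs_sign (R : pzRingType) (T D : seq nat) :
  uniq T ->
  \sum_(S <- subseqs T) (-1) ^+ (size T - size S)%N * (all (fun d => d \in S) D)%:R
  = (all (fun d => d \in T) D && all (fun d => d \in D) T)%:R :> R.
Proof.
elim: T D => [|x T IH] D; first by rewrite /= big_seq1 subnn mul1r andbT.
case/andP=> xT T_uniq; rewrite /= big_cat big_map /=.
have all_cons S :
    all (fun d => d \in x :: S) D = all (fun d => d \in S) [seq d <- D | d != x].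
  by rewrite all_filter; apply: eq_all => d; rewrite /= in_cons; case: (d == x).
under eq_bigr => S _ do rewrite subSS all_cons.
rewrite IH // (eq_big_seq (fun S =>
  - ((-1) ^+ (size T - size S)%N * (all (fun d => d \in S) D)%:R))); last first.
  move=> S; rewrite mem_subseqs => /size_subseq ST.
  by rewrite subSn // exprS mulN1r mulNr.
rewrite sumrN IH // all_cons; case/boolP: (x \in D) => xD /=.
  have /negbTE -> : ~~ all (fun d => d \in T) D by apply/allPn; exists x.
  rewrite subr0; congr (_ && _)%:R; apply: eq_in_all => t tT.
  by rewrite mem_filter; case: eqVneq tT xT => // -> ->.
suff -> : [seq d <- D | d != x] = D by rewrite subrr andbF.
by apply/all_filterP/allP => d dD; apply: contraNneq xD => <-.
Qed.

Lemma sum_coarser_sign (R : pzRingType) n J D :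
  (0 < n)%N -> is_comp n J -> descent_set n D ->
  \sum_(K <- comps n | coarser K J)
     (-1) ^+ (size J - size K)%N * (all (fun d => d \in Des K) D)%:R
  = (D == Des J)%:R :> R.
Proof.
move=> n_gt0 Jn Dset; have Jset := descent_set_Des n_gt0 Jn.
have DesJ_sorted := descent_set_sorted Jset.
transitivity (\sum_(S <- [seq Des K | K <- comps n & coarser K J])
   (-1) ^+ (size (Des J) - size S)%N * (all (fun d => d \in S) D)%:R : R).
  rewrite big_map big_filter big_seq_cond [RHS]big_seq_cond.
  apply: eq_bigr => K /andP[+ _]; rewrite mem_comps => Kn.
  have := comp_nil n_gt0 Kn; have := comp_nil n_gt0 Jn.
  by rewrite !size_Des; case: (J) => // a J' _; case: (K) => // b K' _; rewrite subSS.
rewrite (perm_big _ (perm_Des_coarser n_gt0 Jn)) sum_subseqs_sign; last first.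
  by rewrite (sorted_uniq ltn_trans ltnn).
congr ((_ : bool)%:R); apply/andP/eqP => [[/allP DJ /allP JD]|->]; last by split; apply/allP.
apply: (irr_sorted_eq ltn_trans ltnn) (descent_set_sorted Dset) DesJ_sorted _.
by move=> x; apply/idP/idP => [/DJ|/JD].
Qed.

Section QProduct.

Variables (F : fieldType) (q : F).

Lemma Stilde_pack k v : Stilde F k (pack v) = (sorted leq v && (size v == k)%N)%:R.
Proof. by rewrite /Stilde packed_pack sorted_pack size_map. Qed.

Lemma star_Stilde k (b : wqsym F) u : packed u ->
  star q (Stilde F k) b u =
  ((k <= size u)%N && sorted leq (take k u))%:R * b (pack (drop k u))
    * q ^ ((sinv u)%:Z - (sinv (drop k u))%:Z).
Proof.
move=> u_packed; rewrite /star u_packed.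
under eq_bigr => j _ do rewrite Stilde_pack !sinv_pack.
have [ku|uk] := leqP k (size u); last first.
  rewrite /= !mul0r big1_seq // => j /andP[_]; rewrite mem_index_iota => ju.
  have -> : (size (take j u) == k) = false by rewrite size_takel; apply/eqP; lia.
  by rewrite andbF !mul0r.
rewrite (bigD1_seq k) ?mem_index_iota ?iota_uniq //= big1_seq ?addr0; last first.
  move=> j /andP[jk]; rewrite mem_index_iota => ju.
  by rewrite size_takel ?(negbTE jk) ?andbF ?mul0r // -ltnS.
rewrite size_takel // eqxx andbT.
case/boolP: (sorted leq (take k u)) => [k_sorted|]; last by rewrite !mul0r.
by rewrite (sinv_sorted k_sorted) subr0.
Qed.

Hypothesis q_neq0 : q != 0.

Lemma Sprod_sinv K u : all (fun i => 0 < i)%N K ->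
  Sprod q K u =
  (packed u && (size u == sumn K)%N && descents_in (Des K) u)%:R * q ^+ sinv u.
Proof.
elim: K u => [|k K IH] u.
  by case: u => [|a u] _; rewrite /Sprod /= /wq_one ?andbF ?mul0r // /sinv big_geq // mul1r.
case/andP=> k_gt0 K_pos; rewrite /Sprod /= -/(Sprod q K).
case/boolP: (packed u) => u_packed; last by rewrite /star (negbTE u_packed) mul0r.
rewrite star_Stilde // IH // packed_pack size_map descents_in_pack sinv_pack /= size_drop.
have [u_size|u_size] := eqVneq (size u) (k + sumn K); last first.
  have [ku|] := leqP k (size u); last by rewrite !mul0r.
  have -> : (size u - k == sumn K)%N = false by apply/eqP; move/eqP: u_size; lia.
  by rewrite !(mulr0, mul0r).
rewrite descents_in_cons // u_size addKn leq_addr eqxx /=.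
case: (sorted leq _); last by rewrite !mul0r.
case: (descents_in _ _); last by rewrite !(mulr0, mul0r).
by rewrite !mul1r !exprnP -expfzDr // addrC subrK.
Qed.

Lemma psi_coef_Sprod I L n : sumn I = n -> is_comp n L ->
  psi_coef I (Sprod q L) =
  \sum_(u <- packed_words n | WC u == I) (descents_in (Des L) u)%:R * q ^+ sinv u.
Proof.
move=> <- /andP[L_pos /eqP L_sum]; rewrite /psi_coef big_seq_cond [RHS]big_seq_cond.
apply: eq_bigr => u /andP[/mem_packed_words[u_packed u_size] _].
by rewrite Sprod_sinv // u_packed u_size L_sum eqxx.
Qed.

End QProduct.

Theorem mainTheorem10 (K : fieldType) (charK0 : [pchar K] =i pred0)
  (n : nat) (I J : seq nat) :
  is_comp n I -> is_comp n J ->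
  Dcoef (qK K) I J =
  \sum_(w <- packed_words n | (WC w == I) && (DC w == J)) qK K ^+ sinv w.
Proof.
move=> In Jn; set q := qK K.
have q_neq0 : q != 0 by rewrite /q /qK tofrac_eq0 polyX_eq0.
have [n0|n_gt0] := posnP n.
  move: In Jn; rewrite n0 => /comp0 -> /comp0 ->.
  by rewrite /Dcoef /psi_coef /= !big_cons !big_nil /= /sinv big_geq // mul1r !addr0.
rewrite /Dcoef (eqP (proj2 (andP Jn))).
transitivity (\sum_(L <- comps n | coarser L J) (-1) ^+ (size J - size L)%N *
   \sum_(u <- packed_words n | WC u == I) (descents_in (Des L) u)%:R * q ^+ sinv u).
  rewrite big_seq_cond [RHS]big_seq_cond; apply: eq_bigr => L /andP[/[!mem_comps] Ln _].
  by rewrite (psi_coef_Sprod _ (eqP (proj2 (andP In))) Ln).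
under eq_bigr do rewrite mulr_sumr.
rewrite exchange_big [RHS]big_mkcondr big_seq_cond [RHS]big_seq_cond /=.
apply: eq_bigr => u /andP[/mem_packed_words[_ u_size] _].
have u_gt0 : (0 < size u)%N by rewrite u_size.
have Ju : is_comp (size u) J by rewrite u_size.
under eq_bigr do rewrite mulrA.
rewrite -mulr_suml /descents_in -u_size sum_coarser_sign ?descent_set_descents //.
rewrite -DC_eq_Des //.
by case: (DC u == J); rewrite ?mul1r ?mul0r.
Qed.
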